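(* Let $\xi$ be a model with $\xi(1)=1$ which is not of the form $\xi(t)=at^2$. Let $m,c>0$ solve $$\xi(1)=\frac1m\Big(\frac1m\log\Big(\frac{c+m}{c}\Big)-\frac1{c+m}\Big),\qquad\frac1{\xi'(1)}=c(c+m),$$ and let $\eta(t)=\xi(1)-\int_t^1\int_0^s\phi(\tau)^{-2}d\tau\,ds$ with $\phi(t)=m(1-t)+c$. Then $\eta''(1)\ge\xi''(1)$ if and only if $\xi$ is pure-like or critical.
   Context: A model is $\xi(t)=\sum_{p\ge2}\beta_p^2t^p$, real $\beta_p$ not all zero, with $\xi(1+\epsilon)<\infty$ for some $\epsilon>0$. With $\nu'=\xi'(1)$, $\nu''=\xi''(1)$, define $ABA=\log(\nu''/\nu')-\frac{(\nu''-\nu')(\nu''-\nu'+\nu'^2)}{\nu''\nu'^2}$; $\xi$ is pure-like if $ABA>0$ and critical if $ABA=0$. *)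

From Stdlib Require Import Reals Lra.
From Coquelicot Require Import Coquelicot.
Open Scope R_scope.

Definition xi_coef (beta : nat -> R) (n : nat) : R :=
  if (2 <=? n)%nat then (beta n) ^ 2 else 0.

Definition xi (beta : nat -> R) (t : R) : R := PSeries (xi_coef beta) t.

Definition is_model (beta : nat -> R) : Prop :=
  (exists p : nat, (2 <= p)%nat /\ beta p <> 0) /\
  (exists eps : R, 0 < eps /\ ex_pseries (xi_coef beta) (1 + eps)).

Definition nu1 (beta : nat -> R) : R := Derive (xi beta) 1.
Definition nu2 (beta : nat -> R) : R := Derive_n (xi beta) 2 1.

Definition ABA (beta : nat -> R) : R :=
  ln (nu2 beta / nu1 beta)
  - (nu2 beta - nu1 beta) * (nu2 beta - nu1 beta + (nu1 beta) ^ 2)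
    / (nu2 beta * (nu1 beta) ^ 2).

Definition pure_like (beta : nat -> R) : Prop := ABA beta > 0.
Definition critical (beta : nat -> R) : Prop := ABA beta = 0.

Definition phi (m c t : R) : R := m * (1 - t) + c.

Definition eta (beta : nat -> R) (m c t : R) : R :=
  xi beta 1 - RInt (fun s => RInt (fun tau => / (phi m c tau) ^ 2) 0 s) t 1.

From Stdlib Require Import Reals Lra Lia.
From Coquelicot Require Import Coquelicot.
Open Scope R_scope.

(* Since phi(1) = c, eta''(1) = 1/c^2. Put K = 1/xi'(1) = c (c + m) and
   r = xi''(1)/xi'(1), which is >= 1 because the coefficients of xi are
   nonnegative and vanish in degrees 0 and 1. Then ABA = f(r) with
   f(r) = ln r - (r - 1)/r - K (r - 1)^2/r, and the first defining equation
   of (m, c) says exactly f((c + m)/c) = 0. As f(1) = 0 and f'(r) has the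
   sign of (r - 1)(1 - K (r + 1)), f increases and then decreases on
   [1, oo); hence f(r) >= 0 iff r <= (c + m)/c = K/c^2, i.e. iff
   xi''(1) <= 1/c^2 = eta''(1). *)

(* ABA in the coordinates K = 1 / nu1 and r = nu2 / nu1. *)
Definition aba_of (K r : R) : R := ln r - (r - 1) / r - K * (r - 1) ^ 2 / r.

Lemma aba_of_1 K : aba_of K 1 = 0.
Proof. unfold aba_of; rewrite ln_1; field. Qed.

Lemma derivable_pt_lim_aba_of K s :
  0 < s -> derivable_pt_lim (aba_of K) s ((s - 1) * (1 - K * (s + 1)) / s ^ 2).
Proof.
  intros Hs; apply is_derive_Reals; unfold aba_of.
  auto_derive; [lra | field; lra].
Qed.

Lemma aba_of_increasing K a b :
  0 < K -> 1 <= a < b -> K * (b + 1) <= 1 -> aba_of K a < aba_of K b.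
Proof.
  intros HK Hab HKb.
  destruct (MVT_cor2 (aba_of K) (fun s => (s - 1) * (1 - K * (s + 1)) / s ^ 2)
                     a b (proj2 Hab)) as [z [Hz Haz]].
  { intros z Hz; apply derivable_pt_lim_aba_of; lra. }
  assert (0 < (z - 1) * (1 - K * (z + 1)) / z ^ 2).
  { apply Rdiv_lt_0_compat; [apply Rmult_lt_0_compat|]; nra. }
  nra.
Qed.

Lemma aba_of_decreasing K a b :
  0 < K -> 1 <= a < b -> 1 <= K * (a + 1) -> aba_of K b < aba_of K a.
Proof.
  intros HK Hab HKa.
  destruct (MVT_cor2 (aba_of K) (fun s => (s - 1) * (1 - K * (s + 1)) / s ^ 2)
                     a b (proj2 Hab)) as [z [Hz Haz]].
  { intros z Hz; apply derivable_pt_lim_aba_of; lra. }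
  assert (0 < ((z - 1) * (K * (z + 1) - 1)) / z ^ 2).
  { apply Rdiv_lt_0_compat; [apply Rmult_lt_0_compat|]; nra. }
  assert ((z - 1) * (1 - K * (z + 1)) / z ^ 2
          = - (((z - 1) * (K * (z + 1) - 1)) / z ^ 2)) by (field; lra).
  nra.
Qed.

(* aba_of K rises on [1, 1/K - 1] and falls afterwards, so a zero x > 1 lies past the peak. *)
Lemma aba_of_nonneg_iff K x r :
  0 < K -> 1 < x -> aba_of K x = 0 -> 1 <= r -> (0 <= aba_of K r <-> r <= x).
Proof.
  intros HK Hx Hfx Hr.
  assert (Hpeak : 1 < K * (x + 1)).
  { destruct (Rlt_or_le 1 (K * (x + 1))) as [|HKx]; [easy|].
    pose proof (aba_of_increasing K 1 x HK) as H; rewrite aba_of_1 in H; lra. }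
  split; intros H.
  - destruct (Rle_or_lt r x) as [|Hxr]; [easy|].
    pose proof (aba_of_decreasing K x r HK); lra.
  - destruct (Req_dec r x) as [->|Hrx]; [lra|].
    destruct (Req_dec r 1) as [->|Hr1]; [rewrite aba_of_1; lra|].
    destruct (Rle_or_lt (K * (r + 1)) 1) as [HKr|HKr].
    + pose proof (aba_of_increasing K 1 r HK) as H1; rewrite aba_of_1 in H1; lra.
    + pose proof (aba_of_decreasing K r x HK); lra.
Qed.

Lemma CV_radius_ge_nonneg (a : nat -> R) x :
  (forall n, 0 <= a n) -> 0 <= x -> ex_pseries a x -> Rbar_le x (CV_radius a).
Proof.
  intros Ha Hx [l Hl].
  apply (proj1 (Lub_Rbar_correct (CV_disk a))).
  exists l; apply is_pseries_R in Hl.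
  eapply is_series_ext; [|exact Hl]; intros n; simpl.
  rewrite Rabs_pos_eq; [reflexivity|].
  apply Rmult_le_pos; [apply Ha | apply pow_le; exact Hx].
Qed.

Lemma PSeries_le (a b : nat -> R) x :
  (forall n, 0 <= a n <= b n) -> 0 <= x -> ex_pseries b x ->
  PSeries a x <= PSeries b x.
Proof.
  intros Hab Hx [l Hl]; apply Series_le.
  - intros n; pose proof (pow_le x n Hx); pose proof (Hab n); split; nra.
  - exists l; apply is_pseries_R; exact Hl.
Qed.

(* f''(1) - f'(1) = sum_n n (n - 2) a_n, where only the n = 1 term could be negative. *)
Lemma Derive_le_Derive2_PSeries (a : nat -> R) :
  (forall n, 0 <= a n) -> a 1%nat = 0 -> Rbar_lt 1 (CV_radius a) ->
  Derive (PSeries a) 1 <= Derive_n (PSeries a) 2 1.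
Proof.
  intros Ha Ha1 Hr; rewrite <- Rabs_R1 in Hr.
  rewrite Derive_PSeries, Derive_n_PSeries by exact Hr.
  rewrite PSeries_decr_1 by (apply ex_pseries_derive; exact Hr).
  replace (PS_derive a 0%nat) with 0 by (unfold PS_derive; simpl; rewrite Ha1; ring).
  rewrite Rplus_0_l, Rmult_1_l.
  apply PSeries_le; [|lra|].
  - intros n; unfold PS_decr_1, PS_derive, PS_derive_n.
    replace (n + 2)%nat with (S (S n)) by lia.
    change (Factorial.fact (S (S n))) with (S (S n) * (S n * Factorial.fact n))%nat.
    pose proof (INR_fact_lt_0 n); pose proof (pos_INR n); pose proof (Ha (S (S n))).
    rewrite !mult_INR, !S_INR.
    replace ((INR n + 1 + 1) * ((INR n + 1) * INR (Factorial.fact n))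
               / INR (Factorial.fact n) * a (S (S n)))
      with ((INR n + 1) * ((INR n + 1 + 1) * a (S (S n)))) by (field; lra).
    split; nra.
  - apply CV_radius_inside; rewrite CV_radius_derive_n; exact Hr.
Qed.

Lemma xi_coef_nonneg beta n : 0 <= xi_coef beta n.
Proof. unfold xi_coef; destruct (2 <=? n)%nat; [apply pow2_ge_0 | lra]. Qed.

Lemma nu1_le_nu2 beta : is_model beta -> nu1 beta <= nu2 beta.
Proof.
  intros [_ [eps [Heps Hex]]].
  apply Derive_le_Derive2_PSeries; [apply xi_coef_nonneg | reflexivity |].
  apply Rbar_lt_le_trans with (1 + eps); [simpl; lra|].
  apply CV_radius_ge_nonneg; [apply xi_coef_nonneg | lra | exact Hex].
Qed.

Section DoubleIntegral.

Variables (h : R -> R) (T : R).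
Hypothesis h_cont : forall z, z < T -> continuous h z.

Lemma ex_RInt_lt a b : Rmax a b < T -> ex_RInt h a b.
Proof.
  intros Hab; apply (@ex_RInt_continuous R_CompleteNormedModule).
  intros z Hz; apply h_cont; lra.
Qed.

Lemma is_derive_RInt_lt a s : a < T -> s < T -> is_derive (fun s => RInt h a s) s (h s).
Proof.
  intros Ha Hs; apply is_derive_RInt with a; [|exact (h_cont s Hs)].
  apply (filter_imp (fun y => y < T)); [|exact (open_lt T s Hs)].
  intros y Hy; apply RInt_correct, ex_RInt_lt, Rmax_lub_lt; assumption.
Qed.

Lemma continuous_RInt_lt a s : a < T -> s < T -> continuous (fun s => RInt h a s) s.
Proof.
  intros Ha Hs; apply (@ex_derive_continuous R_AbsRing R_NormedModule).
  eexists; exact (is_derive_RInt_lt a s Ha Hs).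
Qed.

Hypothesis T_gt1 : 1 < T.

Lemma is_derive_sub_RInt_RInt C t :
  t < T -> is_derive (fun t => C - RInt (fun s => RInt h 0 s) t 1) t (RInt h 0 t).
Proof.
  intros Ht.
  replace (RInt h 0 t) with (0 - opp (RInt h 0 t)) by (unfold opp; simpl; ring).
  apply (is_derive_minus (fun _ => C)); [apply (@is_derive_const R_AbsRing R_NormedModule)|].
  apply (is_derive_RInt' (fun s => RInt h 0 s) _ t 1); [|apply continuous_RInt_lt; lra].
  apply (filter_imp (fun y => y < T)); [|exact (open_lt T t Ht)].
  intros y Hy; apply RInt_correct, ex_RInt_continuous; intros z Hz.
  apply continuous_RInt_lt; [lra|].
  assert (Rmax y 1 < T) by (apply Rmax_lub_lt; lra); lra.
Qed.

Lemma Derive2_sub_RInt_RInt C :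
  Derive_n (fun t => C - RInt (fun s => RInt h 0 s) t 1) 2 1 = h 1.
Proof.
  simpl; rewrite (Derive_ext_loc _ (fun s => RInt h 0 s)).
  - apply is_derive_unique, is_derive_RInt_lt; lra.
  - apply (filter_imp (fun y => y < T)); [|exact (open_lt T 1 T_gt1)].
    intros y Hy; apply is_derive_unique, is_derive_sub_RInt_RInt, Hy.
Qed.

End DoubleIntegral.

Lemma phi_pos m c t : 0 < m -> 0 < c -> t < 1 + c / m -> 0 < phi m c t.
Proof.
  intros Hm Hc Ht; unfold phi.
  apply Rmult_lt_compat_l with (r := m) in Ht; [|exact Hm].
  replace (m * (1 + c / m)) with (m + c) in Ht by (field; lra); lra.
Qed.

Lemma Derive2_eta beta m c : 0 < m -> 0 < c -> Derive_n (eta beta m c) 2 1 = / c ^ 2.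
Proof.
  intros Hm Hc; unfold eta.
  rewrite (Derive2_sub_RInt_RInt _ (1 + c / m)).
  - unfold phi; f_equal; ring.
  - intros z Hz; apply (@ex_derive_continuous R_AbsRing R_NormedModule).
    pose proof (phi_pos m c z Hm Hc Hz) as Hphi; unfold phi in *.
    auto_derive; nra.
  - assert (0 < c / m) by (apply Rdiv_lt_0_compat; assumption); lra.
Qed.

Lemma ABA_aba_of beta K :
  0 < K -> nu1 beta = / K -> 0 < nu2 beta -> ABA beta = aba_of K (nu2 beta * K).
Proof.
  intros HK Hn1 Hn2; unfold ABA, aba_of; rewrite Hn1.
  replace (nu2 beta / / K) with (nu2 beta * K) by (field; lra).
  field; nra.
Qed.

Lemma aba_of_root m c :
  0 < m -> 0 < c -> 1 = / m * (/ m * ln ((c + m) / c) - / (c + m)) ->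
  aba_of (c * (c + m)) ((c + m) / c) = 0.
Proof.
  intros Hm Hc Hxi.
  assert (Hln : ln ((c + m) / c) = m ^ 2 + m / (c + m)).
  { apply (f_equal (Rmult (m ^ 2))) in Hxi.
    replace (m ^ 2 * (/ m * (/ m * ln ((c + m) / c) - / (c + m))))
      with (ln ((c + m) / c) - m / (c + m)) in Hxi by (field; lra).
    lra. }
  unfold aba_of; rewrite Hln; field; lra.
Qed.

Theorem lemma5p4 (beta : nat -> R) (m c : R) :
  is_model beta ->
  xi beta 1 = 1 ->
  ~ (exists a : R, forall t : R, -1 <= t <= 1 -> xi beta t = a * t ^ 2) ->
  0 < m -> 0 < c ->
  xi beta 1 = / m * (/ m * ln ((c + m) / c) - / (c + m)) ->
  / nu1 beta = c * (c + m) ->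
  (Derive_n (eta beta m c) 2 1 >= nu2 beta <-> pure_like beta \/ critical beta).
Proof.
  intros Hmodel Hxi1 _ Hm Hc Hxi Hnu1.
  rewrite Hxi1 in Hxi; rewrite Derive2_eta by assumption.
  set (K := c * (c + m)) in *; set (x := (c + m) / c).
  assert (HK : 0 < K) by (unfold K; nra).
  assert (HKinv : K * / K = 1) by (field; lra).
  assert (Hn1 : nu1 beta = / K) by (rewrite <- Hnu1, Rinv_inv; reflexivity).
  pose proof (nu1_le_nu2 beta Hmodel) as Hn12; rewrite Hn1 in Hn12.
  assert (Hr : 1 <= nu2 beta * K) by nra.
  assert (Hx : 1 < x).
  { pose proof (Rdiv_lt_0_compat m c Hm Hc).
    unfold x; replace ((c + m) / c) with (1 + m / c) by (field; lra); lra. }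
  assert (Hscale : / c ^ 2 >= nu2 beta <-> nu2 beta * K <= x).
  { replace (/ c ^ 2) with (x * / K) by (unfold x, K; field; lra).
    split; intros; nra. }
  unfold pure_like, critical; rewrite (ABA_aba_of beta K HK Hn1) by nra.
  rewrite Hscale, <- (aba_of_nonneg_iff K x _ HK Hx (aba_of_root m c Hm Hc Hxi) Hr).
  split; [intros H; destruct (Rle_lt_or_eq_dec _ _ H); [left | right]; lra | lra].
Qed.
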